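(* The largest integer $k$ with $1\leq k\leq n$ and $S(k)=0$ is $k=\lfloor\vartheta^+(G)\rfloor$.
   Context: Let $G$ be a simple graph with vertex set $V=\{1,\dots,n\}$, edge set $E$ and adjacency matrix $A$. Let $e$ be the all-ones vector, $\langle M,N\rangle=\operatorname{trace}(M^TN)$, and $X\geq 0$ mean entrywise nonnegativity. For real $t$ with $1\leq t\leq n$, $Q(t)$ is the semidefinite program $$\min \tfrac12\langle A,X\rangle\ \text{ s.t. } X\succeq 0,\ X\geq 0,\ \operatorname{trace}(X)=t,\ Xe=t\operatorname{diag}(X)$$ over symmetric $n\times n$ matrices $X$, and $S(t)$ denotes its optimal value. Schrijver's number is $$\vartheta^+(G)=\max\ \operatorname{trace}(X)\ \text{ s.t. } X-xx^T\succeq 0,\ \operatorname{diag}(X)=x,\ X_{i,j}=0\ \forall [i,j]\in E,\ X\geq 0.$$ *)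

From HB Require Import structures.
From mathcomp Require Import all_boot all_order all_algebra.
From mathcomp Require Import classical_sets reals.
Set Implicit Arguments. Unset Strict Implicit. Unset Printing Implicit Defensive.
Import Order.TTheory GRing.Theory Num.Theory.
Local Open Scope ring_scope.
Local Open Scope classical_set_scope.

Section Defs.
Variables (R : realType) (n : nat).

Definition adjmx (adj : rel 'I_n) : 'M[R]_n := \matrix_(i, j) (adj i j)%:R.

Definition psd (X : 'M[R]_n) : Prop :=
  X^T = X /\ forall v : 'cV[R]_n, 0 <= (v^T *m X *m v) 0 0.

Definition nonneg_mx (X : 'M[R]_n) : Prop := forall i j, 0 <= X i j.

Definition frob (M N : 'M[R]_n) : R := \tr (M^T *m N).

Definition ones : 'cV[R]_n := const_mx 1.

Definition diagv (X : 'M[R]_n) : 'cV[R]_n := \col_i X i i.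

Definition feasQ (t : R) : set 'M[R]_n :=
  [set X | [/\ X^T = X, psd X, nonneg_mx X, \tr X = t & X *m ones = t *: diagv X]].

Definition Sval (adj : rel 'I_n) (t : R) : R :=
  inf [set (2%:R)^-1 * frob (adjmx adj) X | X in feasQ t].

Definition feasTheta (adj : rel 'I_n) : set ('M[R]_n * 'cV[R]_n) :=
  [set p | let X := p.1 in let x := p.2 in
     [/\ psd (X - x *m x^T), diagv X = x,
         (forall i j, adj i j -> X i j = 0) & nonneg_mx X]].

Definition theta_plus (adj : rel 'I_n) : R :=
  sup [set \tr p.1 | p in feasTheta adj].

End Defs.

From HB Require Import structures.
From mathcomp Require Import all_boot all_order all_algebra.
From mathcomp Require Import classical_sets reals.
From mathcomp Require Import boolp topology normedtype derive.
From mathcomp Require Import ring lra.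
Set Implicit Arguments. Unset Strict Implicit. Unset Printing Implicit Defensive.
Import Order.TTheory GRing.Theory Num.Theory.
Import numFieldNormedType.Exports.
Local Open Scope ring_scope.
Local Open Scope classical_set_scope.

(* Let F be the set of psd, entrywise nonnegative matrices of trace 1 that
   vanish on the edges of G, and let W maximize the sum of entries T = e^T W e
   over the compact set F. Perturbing W to D W D with D = diag(e + h e_i)
   keeps it in the cone generated by F, so optimality gives the first-order
   condition W e = T diag(W). Then theta+(G) = T: a Schrijver-feasible (X, x)
   has e^T X e >= (e^T x)^2 = (tr X)^2 while X / tr X lies in F, and
   (T W, W e) is feasible by Cauchy-Schwarz. For 1 <= t <= T a scaled convex
   combination of W and its diagonal is feasible for Q(t) and vanishes on the
   edges, so S(t) = 0; conversely an optimal X for Q(j) with value 0 vanishes on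
   the edges and X / j lies in F with e^T (X / j) e = j, so j <= T. Hence the
   largest such integer k is floor(T). *)

Section MatrixTopology.
Variable R : realType.

Lemma continuous_sum (T : topologicalType) (I : Type) (r : seq I)
    (f : I -> T -> R) :
  (forall i, continuous (f i)) -> continuous (fun x => \sum_(i <- r) f i x).
Proof.
move=> fC; elim: r => [|a r IHr].
  under eq_fun do rewrite big_nil; exact: cst_continuous.
under eq_fun do rewrite big_cons.
by move=> x; apply: continuousD; [exact: fC | exact: IHr].
Qed.

Lemma continuous_entry_comb n (c : 'I_n -> 'I_n -> R) :
  continuous (fun X : 'M[R]_n => \sum_i \sum_j c i j * X i j).
Proof.
apply: continuous_sum => i; apply: continuous_sum => j X.
by apply: continuousM; [exact: cst_continuous | exact: coord_continuous].
Qed.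

Lemma continuous_mxtrace n : continuous (@mxtrace R n).
Proof. by apply: continuous_sum => i; exact: coord_continuous. Qed.

Lemma closed_eq_fun (T : topologicalType) (f g : T -> R) :
  continuous f -> continuous g -> closed [set x | f x = g x].
Proof.
move=> fC gC; have -> : [set x | f x = g x] = (f \- g) @^-1` [set 0].
  rewrite predeqE => x /=; split => [fg | /subr0_eq //]; by rewrite fg subrr.
apply: preimage_closed; last exact: closed_eq.
by move=> x _; apply: continuousB; [exact: fC | exact: gC].
Qed.

Lemma closed_ge0_fun (T : topologicalType) (f : T -> R) :
  continuous f -> closed [set x | 0 <= f x].
Proof.
move=> fC; apply: (@preimage_closed _ _ f [set y | 0 <= y]); last exact: closed_ge.
by move=> x _; exact: fC.
Qed.

Lemma closed_forall (T : topologicalType) (I : Type) (P : I -> set T) :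
  (forall i, closed (P i)) -> closed [set x | forall i, P i x].
Proof.
move=> PC; have -> : [set x | forall i, P i x] = \bigcap_(i in setT) P i.
  by rewrite predeqE => x; split => [Px i _ | Px i]; exact: Px.
by apply: closed_bigI => i _; exact: PC.
Qed.

Lemma closed_implies (T : topologicalType) (b : bool) (P : set T) :
  closed P -> closed [set x | b -> P x].
Proof.
case: b => PC.
  have -> : [set x | true -> P x] = P by rewrite predeqE => x; split => [/(_ isT) | Px _].
  exact: PC.
have -> : [set x : T | false -> P x] = setT by rewrite predeqE.
exact: closedT.
Qed.

Lemma vec_mx_continuous m n : continuous (@vec_mx R m n).
Proof.
move=> v s /= /(nbhs_ballP (vec_mx v)) [e e0 es].
apply/nbhs_ballP; exists e => //= w [_ vw]; apply: es; split => // i j.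
by rewrite !mxE; exact: vw.
Qed.

Lemma bounded_closed_mx_compact n (A : set 'M[R]_n) (c : R) :
  closed A -> (forall X, A X -> forall i j, `|X i j| <= c) -> compact A.
Proof.
move=> AC Ab; pose B := @vec_mx R n n @^-1` A.
have -> : A = vec_mx @` B.
  rewrite predeqE => X; split => [AX | [v Bv <-] //].
  by exists (mxvec X); rewrite /B /= mxvecK.
apply: continuous_compact.
  by apply: continuous_subspaceT => v; exact: vec_mx_continuous.
have cube : compact [set v : 'rV[R]_(n * n) | forall k, `[- c, c]%classic (v ord0 k)].
  by apply: (@rV_compact R (n * n) (fun=> `[- c, c]%classic)) => _; exact: segment_compact.
apply: subclosed_compact _ cube _.
  by apply: preimage_closed => // v _; exact: vec_mx_continuous.
move=> v Bv k; rewrite /= in_itv /= -ler_norml.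
case/mxvec_indexP: k => i j; have := Ab _ Bv i j.
by rewrite mxE (_ : ord0 = 0).
Qed.

End MatrixTopology.

Section MatrixForm.
Variables (R : comRingType) (n : nat).
Implicit Types (W : 'M[R]_n) (u v w : 'cV[R]_n).

Lemma mx11_trmx (M : 'M[R]_1) : M 0 0 = M^T 0 0.
Proof. by rewrite mxE. Qed.

Definition mxform W u v : R := (u^T *m W *m v) 0 0.

Definition sum_entries W : R := \sum_i \sum_j W i j.

Lemma mxform_sum W u v : mxform W u v = \sum_i \sum_j u i 0 * v j 0 * W i j.
Proof.
rewrite /mxform mxE; under eq_bigr do rewrite mxE big_distrl /=.
rewrite exchange_big /=; apply: eq_bigr => i _; apply: eq_bigr => j _.
by rewrite !mxE; ring.
Qed.

Lemma mxformDl W u u' v : mxform W (u + u') v = mxform W u v + mxform W u' v.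
Proof. by rewrite /mxform linearD /= !mulmxDl mxE. Qed.

Lemma mxformDr W u v v' : mxform W u (v + v') = mxform W u v + mxform W u v'.
Proof. by rewrite /mxform mulmxDr mxE. Qed.

Lemma mxformZl W a u v : mxform W (a *: u) v = a * mxform W u v.
Proof. by rewrite /mxform linearZ /= -!scalemxAl mxE. Qed.

Lemma mxformZr W a u v : mxform W u (a *: v) = a * mxform W u v.
Proof. by rewrite /mxform -scalemxAr mxE. Qed.

Lemma mxform_addmx W W' u v : mxform (W + W') u v = mxform W u v + mxform W' u v.
Proof. by rewrite /mxform mulmxDr mulmxDl mxE. Qed.

Lemma mxform_scalemx W a u v : mxform (a *: W) u v = a * mxform W u v.
Proof. by rewrite /mxform -scalemxAr -scalemxAl mxE. Qed.

Lemma mxform_oppmx W u v : mxform (- W) u v = - mxform W u v.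
Proof. by rewrite -scaleN1r mxform_scalemx mulN1r. Qed.

Lemma mxformC W u v : W^T = W -> mxform W u v = mxform W v u.
Proof.
by move=> WT; rewrite /mxform mx11_trmx !trmx_mul trmxK WT mulmxA.
Qed.

Lemma mxform_delta W i j : mxform W (delta_mx i 0) (delta_mx j 0) = W i j.
Proof. by rewrite /mxform trmx_delta -rowE -colE !mxE. Qed.

Lemma mxform_ones W : mxform W (const_mx 1) (const_mx 1) = sum_entries W.
Proof.
rewrite mxform_sum; apply: eq_bigr => i _; apply: eq_bigr => j _.
by rewrite !mxE !mul1r.
Qed.

Lemma vdotC u v : (u^T *m v) 0 0 = (v^T *m u) 0 0.
Proof. by rewrite mx11_trmx trmx_mul trmxK. Qed.

Lemma outer_mxE u v i j : (u *m v^T) i j = u i 0 * v j 0.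
Proof. by rewrite mxE big_ord1 mxE. Qed.

Lemma mxform_outer u w v v' :
  mxform (u *m w^T) v v' = (v^T *m u) 0 0 * (w^T *m v') 0 0.
Proof. by rewrite /mxform mulmxA -[_ *m w^T *m v']mulmxA mxE big_ord1. Qed.

Lemma sum_entriesZ a W : sum_entries (a *: W) = a * sum_entries W.
Proof.
rewrite /sum_entries mulr_sumr; apply: eq_bigr => i _.
by rewrite mulr_sumr; apply: eq_bigr => j _; rewrite mxE.
Qed.

Lemma sum_entries_delta i : sum_entries (delta_mx i i : 'M[R]_n) = 1.
Proof.
rewrite /sum_entries (bigD1 i) //= [X in _ + X]big1 => [|j ji]; last first.
  by apply: big1 => k _; rewrite mxE (negbTE ji).
rewrite addr0 (bigD1 i) //= big1 => [|k ki]; last by rewrite mxE eqxx (negbTE ki).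
by rewrite mxE !eqxx addr0.
Qed.

Lemma mxtrace_delta i : \tr (delta_mx i i : 'M[R]_n) = 1.
Proof.
rewrite /mxtrace (bigD1 i) //= big1 => [|j ji]; last by rewrite mxE (negbTE ji).
by rewrite mxE eqxx addr0.
Qed.

End MatrixForm.

Lemma quadratic_ge0_discr (R : realFieldType) (a b c : R) :
  0 <= c -> (forall l, 0 <= a + 2 * l * b + l ^+ 2 * c) -> b ^+ 2 <= a * c.
Proof.
move=> c0 q_ge0; have [c_gt0 | c_le0] := ltrP 0 c.
  have := q_ge0 (- b / c).
  have -> : a + 2 * (- b / c) * b + (- b / c) ^+ 2 * c = (a * c - b ^+ 2) / c.
    by field; rewrite gt_eqF.
  by rewrite pmulr_lge0 ?invr_gt0 // subr_ge0.
have c_eq0 : c = 0 by apply/eqP; rewrite eq_le c_le0 c0.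
rewrite c_eq0 mulr0 in q_ge0 *; have [-> | b_neq0] := eqVneq b 0; first by rewrite expr0n.
have := q_ge0 (- (a + 1) / (2 * b)).
have -> : a + 2 * (- (a + 1) / (2 * b)) * b + (- (a + 1) / (2 * b)) ^+ 2 * 0 = -1.
  by field.
lra.
Qed.

Section Psd.
Variables (R : realType) (n : nat).
Implicit Types (W X : 'M[R]_n) (u v : 'cV[R]_n).

Lemma psd_mxform W v : psd W -> 0 <= mxform W v v.
Proof. by case=> _; exact. Qed.

Lemma psd_sym W i j : psd W -> W j i = W i j.
Proof. by case=> WT _; rewrite -[in RHS]WT mxE. Qed.

Lemma psd_diag_ge0 W i : psd W -> 0 <= W i i.
Proof. by move/(psd_mxform (delta_mx i 0)); rewrite mxform_delta. Qed.

Lemma psd_entry_le W i j : psd W -> 2 * W i j <= W i i + W j j.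
Proof.
move=> Wpsd; have := psd_mxform (delta_mx i 0 - delta_mx j 0) Wpsd.
rewrite -scaleN1r !(mxformDl, mxformDr, mxformZl, mxformZr) !mxform_delta.
rewrite (psd_sym j i Wpsd); lra.
Qed.

Lemma psdD W X : psd W -> psd X -> psd (W + X).
Proof.
move=> [WT Wge0] [XT Xge0]; split; first by rewrite linearD /= WT XT.
by move=> v; change (0 <= mxform (W + X) v v); rewrite mxform_addmx addr_ge0 ?Wge0 ?Xge0.
Qed.

Lemma psdZ (c : R) W : 0 <= c -> psd W -> psd (c *: W).
Proof.
move=> c0 [WT Wge0]; split; first by rewrite linearZ /= WT.
by move=> v; change (0 <= mxform (c *: W) v v); rewrite mxform_scalemx mulr_ge0 ?Wge0.
Qed.

Lemma psd_outer u : psd (u *m u^T).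
Proof.
split; first by rewrite trmx_mul trmxK.
by move=> v; change (0 <= mxform (u *m u^T) v v); rewrite mxform_outer vdotC -expr2 sqr_ge0.
Qed.

Lemma psd_rescale (d : 'cV[R]_n) W :
  psd W -> psd (\matrix_(i, j) (d i 0 * W i j * d j 0)).
Proof.
move=> Wpsd; split.
  by apply/matrixP => i j; rewrite !mxE (psd_sym i j Wpsd); ring.
move=> v; change (0 <= mxform (\matrix_(i, j) (d i 0 * W i j * d j 0)) v v).
have -> : mxform (\matrix_(i, j) (d i 0 * W i j * d j 0)) v v
    = mxform W (\col_i (d i 0 * v i 0)) (\col_i (d i 0 * v i 0)).
  rewrite !mxform_sum; apply: eq_bigr => i _; apply: eq_bigr => j _.
  by rewrite !mxE; ring.
exact: psd_mxform.
Qed.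

Lemma psd_diag_part W : psd W -> psd (\matrix_(i, j) ((i == j)%:R * W i j)).
Proof.
move=> Wpsd; split; first by apply/matrixP => i j; rewrite !mxE eq_sym psd_sym.
move=> v; change (0 <= mxform (\matrix_(i, j) ((i == j)%:R * W i j)) v v).
rewrite mxform_sum; apply: sumr_ge0 => i _.
rewrite (bigD1 i) //= big1 => [|j ji]; last by rewrite mxE eq_sym (negbTE ji) mul0r mulr0.
by rewrite addr0 mxE eqxx mul1r -expr2 mulr_ge0 ?sqr_ge0 ?psd_diag_ge0.
Qed.

Lemma psd_cauchy_schwarz W u v :
  psd W -> mxform W u v ^+ 2 <= mxform W u u * mxform W v v.
Proof.
move=> Wpsd; apply: quadratic_ge0_discr; first exact: psd_mxform.
move=> l; have := psd_mxform (u + l *: v) Wpsd.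
rewrite !(mxformDl, mxformDr, mxformZl, mxformZr) (mxformC v u (proj1 Wpsd)).
by congr (_ <= _); ring.
Qed.

Lemma diag_le_trace W i : psd W -> W i i <= \tr W.
Proof.
move=> Wpsd; rewrite /mxtrace (bigD1 i) //= lerDl.
by apply: sumr_ge0 => j _; exact: psd_diag_ge0.
Qed.

Lemma psd_trace_ge0 W : psd W -> 0 <= \tr W.
Proof. by move=> Wpsd; apply: sumr_ge0 => i _; exact: psd_diag_ge0. Qed.

Lemma entry_le_trace W i j : psd W -> nonneg_mx W -> `|W i j| <= \tr W.
Proof.
move=> Wpsd Wge0; rewrite ger0_norm //.
have := psd_entry_le i j Wpsd; have := diag_le_trace i Wpsd.
have := diag_le_trace j Wpsd; lra.
Qed.

Lemma sum_entries_le_trace W : psd W -> sum_entries W <= n%:R * \tr W.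
Proof.
move=> Wpsd; apply: (@le_trans _ _ (\sum_i \sum_j (W i i / 2 + W j j / 2))).
  apply: ler_sum => i _; apply: ler_sum => j _.
  by have := psd_entry_le i j Wpsd; lra.
have -> : \sum_i \sum_j (W i i / 2 + W j j / 2) = \sum_i (W i i / 2 *+ n + \tr W / 2).
  by apply: eq_bigr => i _; rewrite big_split /= sumr_const card_ord -mulr_suml.
rewrite big_split /= sumr_const card_ord sumrMnl -mulr_suml.
by rewrite -mulrnDl -splitr mulr_natl.
Qed.

Lemma closed_psd : closed [set W : 'M[R]_n | psd W].
Proof.
have -> : [set W : 'M[R]_n | psd W] = [set W : 'M[R]_n | forall i j, W j i = W i j]
    `&` [set W | forall v, 0 <= mxform W v v].
  rewrite predeqE => W; split => [Wpsd | [Wsym Wge0]].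
    by split => [i j | v]; [exact: psd_sym | exact: psd_mxform].
  by split=> //; apply/matrixP => i j; rewrite mxE Wsym.
apply: closedI.
  by apply: closed_forall => i; apply: closed_forall => j;
    apply: closed_eq_fun; exact: coord_continuous.
apply: closed_forall => v; apply: closed_ge0_fun.
rewrite (_ : (fun W => _) = fun W => \sum_i \sum_j v i 0 * v j 0 * W i j).
  exact: continuous_entry_comb.
by apply/funext => W; rewrite mxform_sum.
Qed.

Lemma closed_nonneg : closed [set W : 'M[R]_n | nonneg_mx W].
Proof.
apply: closed_forall => i; apply: closed_forall => j.
by apply: closed_ge0_fun; exact: coord_continuous.
Qed.

End Psd.

Section GraphCone.
Variables (R : realType) (n : nat) (adj : rel 'I_n).
Implicit Types (W Y : 'M[R]_n).

Definition vanishes_on_edges W := forall i j, adj i j -> W i j = 0.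

Definition graph_dnn : set 'M[R]_n :=
  [set W | [/\ psd W, nonneg_mx W & vanishes_on_edges W]].

Lemma graph_dnnZ (c : R) W : 0 <= c -> graph_dnn W -> graph_dnn (c *: W).
Proof.
move=> c0 [Wpsd Wge0 W0]; split; first exact: psdZ.
  by move=> i j; rewrite mxE mulr_ge0.
by move=> i j ij; rewrite mxE W0 ?mulr0.
Qed.

Lemma graph_dnn_delta i : irreflexive adj -> graph_dnn (delta_mx i i).
Proof.
move=> adj_irr; split.
- by rewrite -(mul_delta_mx (0 : 'I_1)) -[X in _ *m X]trmx_delta; exact: psd_outer.
- by move=> j k; rewrite mxE ler0n.
- move=> j k jk; rewrite mxE; case: eqP => [ji|] //; case: eqP => [ki|] //=.
  by move: jk; rewrite ji ki adj_irr.
Qed.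

Lemma closed_graph_dnn : closed graph_dnn.
Proof.
have -> : graph_dnn = [set W | psd W] `&` ([set W | nonneg_mx W]
    `&` [set W | forall i j, adj i j -> W i j = 0]).
  by rewrite predeqE => W; split => [[] | [? []]].
apply: closedI; first exact: closed_psd.
apply: closedI; first exact: closed_nonneg.
apply: closed_forall => i; apply: closed_forall => j; apply: closed_implies.
by apply: closed_eq_fun; [exact: coord_continuous | exact: cst_continuous].
Qed.

Lemma continuous_sum_entries : continuous (@sum_entries R n).
Proof.
rewrite (_ : @sum_entries R n = fun W => \sum_i \sum_j 1 * W i j).
  exact: continuous_entry_comb.
by apply/funext => W; apply: eq_bigr => i _; apply: eq_bigr => j _; rewrite mul1r.
Qed.

Lemma graph_dnn_max_exists : (0 < n)%N -> irreflexive adj ->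
  exists W, [/\ graph_dnn W, \tr W = 1 &
    forall Y, graph_dnn Y -> \tr Y = 1 -> sum_entries Y <= sum_entries W].
Proof.
move=> n_gt0 adj_irr; pose S := graph_dnn `&` [set W | \tr W = 1].
have S_delta : S (delta_mx (Ordinal n_gt0) (Ordinal n_gt0)).
  by split; [exact: graph_dnn_delta | exact: mxtrace_delta].
have S_compact : compact S.
  apply: (@bounded_closed_mx_compact _ _ _ 1).
    apply: closedI; first exact: closed_graph_dnn.
    by apply: closed_eq_fun; [exact: continuous_mxtrace | exact: cst_continuous].
  by move=> W [[Wpsd Wge0 _] <-] i j; exact: entry_le_trace.
have [W SW Wmax] := compact_EVT_max (ex_intro _ _ S_delta) S_compact
  (continuous_subspaceT continuous_sum_entries).
rewrite inE in SW; case: SW => Wdnn trW; exists W; split => // Y Ydnn trY.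
by apply: Wmax; rewrite inE.
Qed.

End GraphCone.

Section AttainedBounds.
Variable R : realType.
Implicit Types (E : set R) (x : R).

Lemma sup_attained E x : E x -> ubound E x -> sup E = x.
Proof.
move=> Ex Eub; apply/eqP; rewrite eq_le ge_sup //; last by exists x.
by apply: sup_upper_bound => //; split; exists x.
Qed.

Lemma inf_attained E x : E x -> lbound E x -> inf E = x.
Proof.
move=> Ex Elb; apply/eqP; rewrite eq_le lb_le_inf ?andbT //; last by exists x.
by apply: ge_inf => //; exists x.
Qed.

End AttainedBounds.

Section QProgram.
Variables (R : realType) (n : nat) (adj : rel 'I_n).
Implicit Types (X Z : 'M[R]_n) (t : R).

Lemma rowsum_diagP t X :
  X *m ones R n = t *: diagv X <-> forall i, \sum_j X i j = t * X i i.
Proof.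
have rowsum i : (X *m ones R n) i 0 = \sum_j X i j.
  by rewrite mxE; apply: eq_bigr => j _; rewrite mxE mulr1.
split=> [Xe i | Xe].
  by have := congr1 (fun M : 'cV_n => M i 0) Xe; rewrite rowsum !mxE.
by apply/matrixP => i k; rewrite ord1 rowsum Xe !mxE.
Qed.

Lemma feasQ_sum_entries t X : feasQ t X -> sum_entries X = t * t.
Proof.
case=> _ _ _ trX /rowsum_diagP Xe.
by rewrite /sum_entries (eq_bigr _ (fun i _ => Xe i)) -mulr_sumr -/(mxtrace X) trX.
Qed.

Lemma closed_feasQ t : closed (@feasQ R n t).
Proof.
have -> : @feasQ R n t = [set X | psd X] `&` ([set X | nonneg_mx X]
    `&` ([set X : 'M[R]_n | forall i, \sum_j X i j = t * X i i]
    `&` [set X : 'M[R]_n | \tr X = t])).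
  rewrite predeqE => X; split.
    by case=> _ Xpsd Xge0 trX /rowsum_diagP Xe.
  by case=> Xpsd [Xge0 [/rowsum_diagP Xe trX]]; split => //; case: Xpsd.
apply: closedI; first exact: closed_psd.
apply: closedI; first exact: closed_nonneg.
apply: closedI; last first.
  by apply: closed_eq_fun; [exact: continuous_mxtrace | exact: cst_continuous].
apply: closed_forall => i; apply: closed_eq_fun.
  by apply: continuous_sum => j; exact: coord_continuous.
by move=> X; apply: continuousM; [exact: cst_continuous | exact: coord_continuous].
Qed.

Lemma feasQ_nonempty (j : nat) : (j <= n)%N -> @feasQ R n j%:R !=set0.
Proof.
move=> jn; pose u : 'cV[R]_n := \col_i (i < j)%N%:R.
have u2 i : u i 0 * u i 0 = u i 0 by rewrite !mxE; case: (i < j)%N; rewrite ?mulr1 ?mulr0.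
have sum_u : \sum_i u i 0 = j%:R.
  transitivity (\sum_(i < n | (i < j)%N) (1 : R)).
    by rewrite [RHS]big_mkcond; apply: eq_bigr => i _; rewrite mxE; case: ifP.
  by rewrite -(big_ord_widen _ (fun=> 1) jn) sumr_const card_ord.
exists (u *m u^T); split.
- by rewrite trmx_mul trmxK.
- exact: psd_outer.
- by move=> a b; rewrite outer_mxE !mxE mulr_ge0.
- by rewrite -sum_u; apply: eq_bigr => i _; rewrite outer_mxE u2.
apply/rowsum_diagP => i; rewrite outer_mxE u2 -sum_u mulr_suml.
by apply: eq_bigr => k _; rewrite outer_mxE mulrC.
Qed.

Lemma frob_adjmx X : frob (adjmx R adj) X = \sum_i \sum_j (adj i j)%:R * X i j.
Proof.
rewrite /frob /mxtrace; under eq_bigr do rewrite mxE.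
rewrite exchange_big; apply: eq_bigr => i _; apply: eq_bigr => j _.
by rewrite !mxE.
Qed.

Lemma frob_adjmx_ge0 X : nonneg_mx X -> 0 <= frob (adjmx R adj) X.
Proof.
move=> Xge0; rewrite frob_adjmx; apply: sumr_ge0 => i _; apply: sumr_ge0 => j _.
exact: mulr_ge0.
Qed.

Lemma frob_adjmx_eq0 X :
  nonneg_mx X -> frob (adjmx R adj) X = 0 <-> vanishes_on_edges adj X.
Proof.
move=> Xge0; rewrite frob_adjmx; split => [sum0 i j ij | X0].
  have term_ge0 k l : 0 <= (adj k l)%:R * X k l by rewrite mulr_ge0.
  have row0 := psumr_eq0P (fun k _ => sumr_ge0 _ (fun l _ => term_ge0 k l)) sum0.
  move: (psumr_eq0P (fun l _ => term_ge0 i l) (row0 i isT)) => /(_ j isT).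
  by rewrite ij mul1r.
apply: big1 => i _; apply: big1 => j _.
by case ij: (adj i j); [rewrite X0 ?mulr0 | rewrite mul0r].
Qed.

Lemma Sval_eq0_of_vanishing t Z :
  feasQ t Z -> vanishes_on_edges adj Z -> Sval adj t = 0.
Proof.
move=> QZ Z0; apply: inf_attained.
  by exists Z => //; rewrite (proj2 (frob_adjmx_eq0 _) Z0) ?mulr0 //; case: QZ.
move=> _ [X [_ _ Xge0 _ _] <-].
by rewrite mulr_ge0 ?invr_ge0 ?ler0n ?frob_adjmx_ge0.
Qed.

Lemma continuous_frob_adjmx : continuous (@frob R n (adjmx R adj)).
Proof.
rewrite (_ : frob _ = fun X => \sum_i \sum_j (adj i j)%:R * X i j).
  exact: continuous_entry_comb.
by apply/funext => X; rewrite frob_adjmx.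
Qed.

(* [inf set0 = 0], so [Sval adj t = 0] alone does not make [feasQ t] nonempty. *)
Lemma vanishing_feasQ_of_Sval_eq0 (j : nat) : (j <= n)%N -> Sval adj (j%:R : R) = 0 ->
  exists2 X : 'M[R]_n, feasQ j%:R X & vanishes_on_edges adj X.
Proof.
move=> jn S0; have Q_compact : compact (@feasQ R n j%:R).
  apply: (@bounded_closed_mx_compact R n (@feasQ R n j%:R) j%:R).
    exact: closed_feasQ.
  by move=> X [_ Xpsd Xge0 <- _] i k; exact: entry_le_trace.
have obj_cont : continuous (fun X => 2%:R^-1 * frob (adjmx R adj) X).
  move=> X; apply: (@continuousM _ _ (fun=> 2%:R^-1) (frob (adjmx R adj))).
    exact: cst_continuous.
  exact: continuous_frob_adjmx.
have [X QX Xmin] := compact_EVT_min (feasQ_nonempty jn) Q_compact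
  (continuous_subspaceT obj_cont).
rewrite inE in QX; exists X => //; have [_ _ Xge0 _ _] := QX.
have objX : 2%:R^-1 * frob (adjmx R adj) X = 0.
  rewrite -S0; apply/esym/inf_attained; first by exists X.
  by move=> _ [Y QY <-]; apply: Xmin; rewrite inE.
move/eqP: objX; rewrite mulf_eq0 invr_eq0 pnatr_eq0 /=.
by move/eqP/(frob_adjmx_eq0 Xge0).
Qed.

End QProgram.

Lemma quadratic_le0_near0 (R : realFieldType) (b c : R) :
  (forall h, -1/2 <= h <= 1/2 -> 2 * h * c + h ^+ 2 * b <= 0) -> c = 0.
Proof.
move=> q_le0; apply/eqP/negPn/negP => c_neq0.
set K := `|b| + `|c| + 1.
have K_gt0 : 0 < K by rewrite /K; have := normr_ge0 b; have := normr_ge0 c; lra.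
have cK : `|c| < K by rewrite /K; have := normr_ge0 b; lra.
have bK : `|b| < 4 * K by rewrite /K; have := normr_ge0 b; have := normr_ge0 c; lra.
have h_small : -1/2 <= c / (2 * K) <= 1/2.
  suff : `|c / (2 * K)| <= 1 / 2 by rewrite ler_norml mulNr.
  rewrite normrM normfV (ger0_norm (_ : 0 <= 2 * K)); last lra.
  by rewrite ler_pdivrMr; lra.
have := q_le0 _ h_small.
have -> : 2 * (c / (2 * K)) * c + (c / (2 * K)) ^+ 2 * b
    = c ^+ 2 / (4 * K ^+ 2) * (4 * K + b) by field; rewrite gt_eqF.
apply/negP; rewrite -ltNge; apply: mulr_gt0.
  by rewrite divr_gt0 ?exprn_even_gt0 ?mulr_gt0 ?exprn_gt0.
have := ler_norm (- b); rewrite normrN; lra.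
Qed.

Section GraphDnnMax.
Variables (R : realType) (n : nat) (adj : rel 'I_n) (W : 'M[R]_n).
Hypotheses (W_dnn : graph_dnn adj W) (trW : \tr W = 1).
Hypothesis W_max :
  forall Y, graph_dnn adj Y -> \tr Y = 1 -> sum_entries Y <= sum_entries W.
Local Notation T := (sum_entries W).
Local Notation e := (ones R n).
Implicit Types (Y : 'M[R]_n) (d : 'cV[R]_n).

Let W_psd : psd W. Proof. by case: W_dnn. Qed.

Lemma sum_entries_le_max Y : graph_dnn adj Y -> sum_entries Y <= T * \tr Y.
Proof.
move=> Ydnn; have [Ypsd _ _] := Ydnn.
have [tr0 | tr_neq0] := eqVneq (\tr Y) 0.
  by have := sum_entries_le_trace Ypsd; rewrite tr0 !mulr0.
have tr_gt0 : 0 < \tr Y by rewrite lt_neqAle eq_sym tr_neq0 psd_trace_ge0.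
have inv_ge0 : 0 <= (\tr Y)^-1 by rewrite invr_ge0 ltW.
have := W_max (graph_dnnZ inv_ge0 Ydnn).
rewrite mxtraceZ mulVf // sum_entriesZ mulrC -ler_pdivrMr //.
by apply.
Qed.

Lemma max_ge0 : 0 <= T.
Proof.
have [_ W_ge0 _] := W_dnn.
by apply: sumr_ge0 => i _; apply: sumr_ge0 => j _.
Qed.

Lemma max_le_n : T <= n%:R.
Proof. by have := sum_entries_le_trace W_psd; rewrite trW mulr1. Qed.

Lemma max_ge1 (i : 'I_n) : irreflexive adj -> 1 <= T.
Proof.
move=> adj_irr; rewrite -(sum_entries_delta R i).
by apply: W_max; [exact: graph_dnn_delta | exact: mxtrace_delta].
Qed.

Lemma mxform_le_max d : (forall i, 0 <= d i 0) ->
  mxform W d d <= T * \sum_i d i 0 ^+ 2 * W i i.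
Proof.
move=> d_ge0; have [_ W_ge0 W0] := W_dnn.
set Wd := \matrix_(i, j) (d i 0 * W i j * d j 0).
have Wd_dnn : graph_dnn adj Wd.
  split; first exact: psd_rescale.
    by move=> i j; rewrite mxE !mulr_ge0.
  by move=> i j ij; rewrite mxE W0 // mulr0 mul0r.
have := sum_entries_le_max Wd_dnn.
have -> : sum_entries Wd = mxform W d d.
  rewrite mxform_sum; apply: eq_bigr => i _; apply: eq_bigr => j _.
  by rewrite mxE; ring.
congr (_ <= _ * _); apply: eq_bigr => i _; rewrite mxE; ring.
Qed.

(* [mxform_le_max] at [d = e + h e_i] is a quadratic inequality in [h] that
   holds with equality at [h = 0], so its linear coefficient vanishes. *)
Lemma max_first_order : W *m e = T *: diagv W.
Proof.
apply/rowsum_diagP => i; set r := \sum_j W i j; set w := W i i.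
suff : r - T * w = 0 by move/subr0_eq.
apply: (@quadratic_le0_near0 _ (w - T * w)) => h /andP[h_ge h_le].
pose d := e + h *: delta_mx i 0.
have d_ge0 a : 0 <= d a 0.
  by rewrite !mxE; case: (a == i); rewrite /= ?mulr1 ?mulr0; lra.
have formE : mxform W d d = T + 2 * h * r + h ^+ 2 * w.
  have rE : mxform W (delta_mx i 0) e = r.
    rewrite /mxform trmx_delta -rowE mxE; apply: eq_bigr => j _.
    by rewrite !mxE mulr1.
  rewrite !(mxformDl, mxformDr, mxformZl, mxformZr) mxform_delta /ones mxform_ones.
  by rewrite (mxformC _ _ (proj1 W_psd)) -/(ones R n) rE /w; ring.
have tauE : \sum_a d a 0 ^+ 2 * W a a = (1 + h) ^+ 2 * w + (1 - w).
  have off_diag : \sum_(a | a != i) W a a = 1 - w.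
    by move: trW; rewrite /mxtrace (bigD1 i) //= => <-; rewrite addrC addrK.
  rewrite (bigD1 i) //= -off_diag !mxE !eqxx mulr1; congr (_ + _).
  apply: eq_bigr => a ai.
  by rewrite !mxE (negbTE ai) mulr0 addr0 expr1n mul1r.
have := mxform_le_max d_ge0; rewrite formE tauE => le_max.
have -> : 2 * h * (r - T * w) + h ^+ 2 * (w - T * w)
    = T + 2 * h * r + h ^+ 2 * w - T * ((1 + h) ^+ 2 * w + (1 - w)) by ring.
by rewrite subr_le0.
Qed.

Lemma feasTheta_trace_le_max p : feasTheta adj p -> \tr p.1 <= T.
Proof.
case: p => Y y [/= Mpsd Ydiag Y0 Y_ge0].
have YE : Y = (Y - y *m y^T) + y *m y^T by rewrite subrK.
have Ypsd : psd Y by rewrite YE; exact: psdD Mpsd (psd_outer y).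
have ey : (e^T *m y) 0 0 = \tr Y.
  rewrite mxE; apply: eq_bigr => i _.
  by rewrite -Ydiag !mxE mul1r.
have sq_le : \tr Y ^+ 2 <= sum_entries Y.
  rewrite -mxform_ones -/(ones R n) [in X in _ <= X]YE mxform_addmx mxform_outer.
  rewrite [(y^T *m _) 0 0]vdotC ey -expr2 lerDr; exact: psd_mxform.
have := sum_entries_le_max (And3 Ypsd Y_ge0 Y0).
have := max_ge0; have := psd_trace_ge0 Ypsd; nra.
Qed.

Lemma feasTheta_max : feasTheta adj (T *: W, W *m e).
Proof.
have [_ W_ge0 W0] := W_dnn; split => /=.
- split; first by rewrite linearB /= linearZ /= (proj1 W_psd) trmx_mul trmxK.
  move=> v; change (0 <= mxform (T *: W - (W *m e) *m (W *m e)^T) v v).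
  rewrite mxform_addmx mxform_oppmx mxform_scalemx mxform_outer subr_ge0.
  rewrite [((W *m e)^T *m v) 0 0]vdotC -expr2 mulmxA -/(mxform W v e) mulrC.
  by have := psd_cauchy_schwarz v e W_psd; rewrite /ones mxform_ones.
- by rewrite max_first_order; apply/matrixP => i k; rewrite !mxE.
- by move=> i j ij; rewrite mxE W0 // mulr0.
- by move=> i j; rewrite mxE mulr_ge0 // max_ge0.
Qed.

Lemma theta_plus_max : theta_plus R adj = T.
Proof.
apply: sup_attained.
  by exists (T *: W, W *m e); [exact: feasTheta_max | rewrite /= mxtraceZ trW mulr1].
by move=> _ [p pF <-]; exact: feasTheta_trace_le_max.
Qed.

Lemma feasQ_vanishing_of_le_max t : 1 <= t <= T ->
  exists2 Z : 'M[R]_n, feasQ t Z & vanishes_on_edges adj Z.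
Proof.
case/andP=> t_ge1 t_leT; have [_ W_ge0 W0] := W_dnn.
(* [a + b = t] fixes the trace and [a + b T = t ^+ 2] the row sums, since
   [W e = T diag W]; for [T = 1] we have [t = 1] and [b] is the junk value [0]. *)
pose b := t * (t - 1) / (T - 1); pose a := t - b.
have [bT a_ge0] : b * (T - 1) = t * (t - 1) /\ 0 <= a.
  have [T1 | T_neq1] := eqVneq T 1.
    have t1 : t = 1 by lra.
    by rewrite /a /b T1 t1 !subrr !mulr0 mul0r subr0.
  have T_gt1 : 0 < T - 1 by rewrite subr_gt0 lt_neqAle eq_sym T_neq1; lra.
  by rewrite /a /b mulfVK ?gt_eqF // subr_ge0 ler_pdivrMr //; nra.
have b_ge0 : 0 <= b by rewrite /b divr_ge0 ?mulr_ge0 //; lra.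
pose D : 'M[R]_n := \matrix_(i, j) ((i == j)%:R * W i j).
have ZE i j : (a *: D + b *: W) i j = a * ((i == j)%:R * W i j) + b * W i j.
  by rewrite !mxE.
exists (a *: D + b *: W); last by move=> i j ij; rewrite ZE W0 // !mulr0 addr0.
split.
- by apply/matrixP => i j; rewrite mxE !ZE eq_sym psd_sym.
- by apply: psdD; apply: psdZ => //; exact: psd_diag_part.
- move=> i j; rewrite ZE; apply: addr_ge0; apply: mulr_ge0 => //.
  exact: mulr_ge0.
- have trD : \tr D = 1 by rewrite -trW; apply: eq_bigr => i _; rewrite mxE eqxx mul1r.
  by rewrite mxtraceD !mxtraceZ trD trW !mulr1 /a subrK.
apply/rowsum_diagP => i; have /rowsum_diagP Wrow := max_first_order.
rewrite ZE eqxx mul1r (eq_bigr _ (fun j _ => ZE i j)) big_split /= -mulr_sumr.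
rewrite (bigD1 i) //= big1 => [|j ji]; last by rewrite eq_sym (negbTE ji) mul0r.
rewrite eqxx mul1r addr0 -mulr_sumr Wrow; apply/eqP; rewrite -subr_eq0.
have -> : a * W i i + b * (T * W i i) - t * (a * W i i + b * W i i)
    = (b * (T - 1) - t * (t - 1)) * W i i by rewrite /a; ring.
by rewrite bT subrr mul0r.
Qed.

Lemma Sval_eq0_of_le_max t : 1 <= t <= T -> Sval adj t = 0.
Proof. by case/feasQ_vanishing_of_le_max => Z; exact: Sval_eq0_of_vanishing. Qed.

Lemma le_max_of_Sval_eq0 (j : nat) :
  (0 < j <= n)%N -> Sval adj (j%:R : R) = 0 -> j%:R <= T.
Proof.
case/andP=> j_gt0 jn /(vanishing_feasQ_of_Sval_eq0 jn) [X QX X0].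
have [_ Xpsd X_ge0 trX _] := QX.
have := sum_entries_le_max (And3 Xpsd X_ge0 X0).
by rewrite (feasQ_sum_entries QX) trX ler_pM2r ?ltr0n.
Qed.

End GraphDnnMax.

Theorem mainTheorem13 (R : realType) (n : nat) (adj : rel 'I_n)
    (adj_sym : symmetric adj) (adj_irr : irreflexive adj) (hn : (1 <= n)%N) :
  exists k : nat,
    [/\ (1 <= k <= n)%N,
        @Sval R n adj k%:R = 0,
        (forall j : nat, (1 <= j <= n)%N -> @Sval R n adj j%:R = 0 -> (j <= k)%N)
      & (k%:Z = Num.floor (@theta_plus R n adj))%R].
Proof.
have [W [W_dnn trW W_max]] := graph_dnn_max_exists R hn adj_irr.
have T_ge1 : 1 <= sum_entries W := max_ge1 W_max (Ordinal hn) adj_irr.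
have T_le_n : sum_entries W <= n%:R := max_le_n W_dnn trW.
have T_ge0 : 0 <= sum_entries W by lra.
exists (Num.truncn (sum_entries W)); split.
- by rewrite truncn_gt0 T_ge1 truncn_le_nat; lra.
- apply: (Sval_eq0_of_le_max W_dnn trW W_max).
  by rewrite ler1n truncn_gt0 T_ge1 truncn_le.
- move=> j j_range /(le_max_of_Sval_eq0 W_max j_range).
  by rewrite truncn_ge_nat.
- rewrite (theta_plus_max W_dnn trW W_max) truncEfloor.
  by move: T_ge0; rewrite -floor_ge0; case: (Num.floor _).
Qed.
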